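(* Let $G$ be a group and $N$ a normal subgroup of $G$. If $S=\bigoplus_{g\in G}S_g$ is symmetrically $G$-graded, then the induced $G/N$-grading $\{S_C\}_{C\in G/N}$ is symmetric, i.e. $S_CS_{C^{-1}}S_C=S_C$ for all $C\in G/N$.
   Context: Rings are associative, not necessarily unital; $AB$ denotes finite sums of products. A $G$-grading: $S=\bigoplus_gS_g$, $S_gS_h\subseteq S_{gh}$; it is symmetric if $S_gS_{g^{-1}}S_g=S_g$ for all $g\in G$. The induced $G/N$-grading is $S_C=\bigoplus_{g\in C}S_g$ for $C\in G/N$. *)

(* Abstract (possibly infinite) groups and non-unital rings
   are given by explicit carriers/operations with axioms. *)
From mathcomp Require Import all_boot all_algebra.
From Stdlib Require List.
Set Implicit Arguments. Unset Strict Implicit. Unset Printing Implicit Defensive.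
Import GRing.Theory.
Local Open Scope ring_scope.

Record is_group (G : Type) (op : G -> G -> G) (e : G) (inv : G -> G) : Prop := {
  grp_assoc : forall x y z, op x (op y z) = op (op x y) z;
  grp_idl : forall x, op e x = x;
  grp_idr : forall x, op x e = x;
  grp_invl : forall x, op (inv x) x = e;
  grp_invr : forall x, op x (inv x) = e }.

Record is_normal_subgroup (G : Type) (op : G -> G -> G) (e : G) (inv : G -> G)
    (N : G -> Prop) : Prop := {
  nsg_one : N e;
  nsg_mul : forall x y, N x -> N y -> N (op x y);
  nsg_inv : forall x, N x -> N (inv x);
  nsg_conj : forall g x, N x -> N (op (op g x) (inv g)) }.

Record is_rng (S : zmodType) (mul : S -> S -> S) : Prop := {
  rng_assoc : forall x y z, mul x (mul y z) = mul (mul x y) z;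
  rng_mulDl : forall x y z, mul (x + y) z = mul x z + mul y z;
  rng_mulDr : forall x y z, mul x (y + z) = mul x y + mul x z }.

Definition setmul (S : zmodType) (mul : S -> S -> S) (A B : S -> Prop) : S -> Prop :=
  fun s => exists l : seq (S * S),
    (forall p, p \in l -> A p.1 /\ B p.2) /\ s = \sum_(p <- l) mul p.1 p.2.

Record is_grading (G : Type) (op : G -> G -> G) (S : zmodType) (mul : S -> S -> S)
    (Sg : G -> S -> Prop) : Prop := {
  gr_zero : forall g, Sg g 0;
  gr_sub : forall g x y, Sg g x -> Sg g y -> Sg g (x - y);
  gr_mul : forall g h s, setmul mul (Sg g) (Sg h) s -> Sg (op g h) s;
  gr_span : forall s, exists (l : list G) (x : G -> S),
      (forall g, List.In g l -> Sg g (x g)) /\ s = \sum_(g <- l) x g;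
  gr_indep : forall (l : list G) (x : G -> S), List.NoDup l ->
      (forall g, List.In g l -> Sg g (x g)) -> \sum_(g <- l) x g = 0 ->
      forall g, List.In g l -> x g = 0 }.

Definition symmetric_grading (G : Type) (inv : G -> G) (S : zmodType)
    (mul : S -> S -> S) (Sg : G -> S -> Prop) : Prop :=
  forall g s, setmul mul (setmul mul (Sg g) (Sg (inv g))) (Sg g) s <-> Sg g s.

(* C is a (left) coset gN of N, i.e. an element of G/N *)
Definition is_coset (G : Type) (op : G -> G -> G) (inv : G -> G) (N : G -> Prop)
    (C : G -> Prop) : Prop :=
  exists g, forall h, C h <-> N (op (inv g) h).

Definition setinv (G : Type) (inv : G -> G) (C : G -> Prop) : G -> Prop :=
  fun h => C (inv h).

Definition induced_comp (G : Type) (S : zmodType) (Sg : G -> S -> Prop)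
    (C : G -> Prop) : S -> Prop :=
  fun s => exists (l : list G) (x : G -> S),
    (forall g, List.In g l -> C g /\ Sg g (x g)) /\ s = \sum_(g <- l) x g.

(* Normality gives C C^-1 = N and N C = C, so the grading axiom
   S_g S_h ⊆ S_gh yields S_C S_{C^-1} S_C ⊆ S_N S_C ⊆ S_C. Conversely S_C is
   additively spanned by the S_g with g in C, and by symmetry of the G-grading
   S_g = S_g S_{g^-1} S_g ⊆ S_C S_{C^-1} S_C. *)

From mathcomp Require Import all_boot all_algebra.
From Stdlib Require List.
From Stdlib Require Import Classical ClassicalEpsilon.
Set Implicit Arguments. Unset Strict Implicit. Unset Printing Implicit Defensive.
Import GRing.Theory.
Local Open Scope ring_scope.

Section Group.

Variables (G : Type) (op : G -> G -> G) (e : G) (inv : G -> G).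
Hypothesis grp : is_group op e inv.

Lemma grp_mulKV x y : op x (op (inv x) y) = y.
Proof. by rewrite (grp_assoc grp) (grp_invr grp) (grp_idl grp). Qed.

Lemma grp_inv_uniq x y : op x y = e -> y = inv x.
Proof.
move=> xy_e.
by rewrite -(grp_idl grp y) -(grp_invl grp x) -(grp_assoc grp) xy_e (grp_idr grp).
Qed.

Lemma grp_invK x : inv (inv x) = x.
Proof. by symmetry; apply: grp_inv_uniq; rewrite (grp_invl grp). Qed.

Lemma grp_invM x y : inv (op x y) = op (inv y) (inv x).
Proof.
symmetry; apply: grp_inv_uniq.
by rewrite (grp_assoc grp) -(grp_assoc grp x) (grp_invr grp) (grp_idr grp) (grp_invr grp).
Qed.

Variables (N C : G -> Prop).
Hypotheses (normalN : is_normal_subgroup op e inv N) (cosetC : is_coset op inv N C).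

Lemma coset_mul_setinv a b : C a -> setinv inv C b -> N (op a b).
Proof.
have [g defC] := cosetC; move=> /defC Na /defC Nb.
have := nsg_conj normalN g (nsg_mul normalN Na (nsg_inv normalN Nb)).
by rewrite grp_invM !grp_invK -!(grp_assoc grp) grp_mulKV (grp_invr grp) (grp_idr grp).
Qed.

Lemma normal_mul_coset k c : N k -> C c -> C (op k c).
Proof.
have [g defC] := cosetC; move=> Nk /defC Nc; apply/defC.
have := nsg_mul normalN (nsg_conj normalN (inv g) Nk) Nc.
by rewrite grp_invK -!(grp_assoc grp) grp_mulKV.
Qed.

End Group.

Section Setmul.

Variables (S : zmodType) (mul : S -> S -> S).

Lemma setmul0 (A B : S -> Prop) : setmul mul A B 0.
Proof. by exists [::]; rewrite big_nil. Qed.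

Lemma setmulD (A B : S -> Prop) s t :
  setmul mul A B s -> setmul mul A B t -> setmul mul A B (s + t).
Proof.
move=> [l1 [Al1 ->]] [l2 [Al2 ->]]; exists (l1 ++ l2); rewrite big_cat.
by split=> // p; rewrite mem_cat => /orP [/Al1|/Al2].
Qed.

Lemma setmulS (A A' B B' : S -> Prop) s :
  (forall a, A a -> A' a) -> (forall b, B b -> B' b) ->
  setmul mul A B s -> setmul mul A' B' s.
Proof. by move=> AA' BB' [l [Al ->]]; exists l; split=> // p /Al [/AA' ? /BB' ?]. Qed.

Lemma setmul_ind (A B P : S -> Prop) :
  P 0 -> (forall a b t, A a -> B b -> P t -> P (mul a b + t)) ->
  forall s, setmul mul A B s -> P s.
Proof.
move=> P0 PD s [l [Al ->]]; elim: l Al => [|p l IHl] Al; first by rewrite big_nil.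
have [Ap Bp] := Al p (mem_head _ _).
by rewrite big_cons; apply: PD => //; apply: IHl => q lq; apply: Al; rewrite in_cons lq orbT.
Qed.

Hypothesis rng : is_rng mul.

Lemma rng_mul0l x : mul 0 x = 0.
Proof. by apply: (addrI (mul 0 x)); rewrite -(rng_mulDl rng) !addr0. Qed.

Lemma rng_mul0r x : mul x 0 = 0.
Proof. by apply: (addrI (mul x 0)); rewrite -(rng_mulDr rng) !addr0. Qed.

End Setmul.

Definition upd (G T : Type) (x : G -> T) (g : G) (w : T) : G -> T :=
  fun h => if excluded_middle_informative (h = g) then w else x h.

Section Update.

Variables (G : Type) (S : zmodType) (x : G -> S) (g : G) (w : S).

Lemma upd_eq : upd x g w g = w.
Proof. by rewrite /upd; case: excluded_middle_informative. Qed.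

Lemma sum_upd_notin (l : list G) :
  ~ List.In g l -> \sum_(h <- l) upd x g w h = \sum_(h <- l) x h.
Proof.
elim: l => [|h l IHl]; first by rewrite !big_nil.
move=> /List.not_in_cons [gh gl].
by rewrite !big_cons IHl // /upd; case: excluded_middle_informative => // hg; case: gh.
Qed.

Lemma sum_upd_in (l : list G) : List.NoDup l -> List.In g l ->
  \sum_(h <- l) upd x g w h = \sum_(h <- l) x h + (w - x g).
Proof.
elim: l => [|h l IHl] // /List.NoDup_cons_iff [hl uniql] [hg|gl]; rewrite !big_cons.
  subst h; rewrite upd_eq sum_upd_notin //.
  by rewrite [RHS]addrAC [x g + _]addrC subrK.
have hg : h <> g by move=> hg; apply: hl; rewrite hg.
by rewrite IHl // addrA /upd; case: excluded_middle_informative.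
Qed.

End Update.

Section InducedComponent.

Variables (G : Type) (op : G -> G -> G) (S : zmodType) (mul : S -> S -> S).
Variable Sg : G -> S -> Prop.
Hypothesis grading : is_grading op mul Sg.

Lemma gr_add g a b : Sg g a -> Sg g b -> Sg g (a + b).
Proof.
move=> Sa Sb; rewrite -[b]opprK -[- b]sub0r.
by apply: (gr_sub grading) Sa (gr_sub grading (gr_zero grading g) Sb).
Qed.

Lemma induced_comp0 D : induced_comp Sg D 0.
Proof. by exists [::], (fun _ => 0); rewrite big_nil. Qed.

Lemma induced_comp_ind D (P : S -> Prop) :
  P 0 -> (forall g v s, D g -> Sg g v -> P s -> P (v + s)) ->
  forall s, induced_comp Sg D s -> P s.
Proof.
move=> P0 PD s [l [x [Dl ->]]]; elim: l Dl => [|g l IHl] Dl; first by rewrite big_nil.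
have [Dg Sx] := Dl g (or_introl erefl).
by rewrite big_cons; apply: (PD g) => //; apply: IHl => h lh; apply: Dl; right.
Qed.

Definition nodup_comp D s := exists (l : list G) (x : G -> S), List.NoDup l /\
  (forall g, List.In g l -> D g /\ Sg g (x g)) /\ s = \sum_(g <- l) x g.

(* A sum over a list with repeated degrees would count x g several times, so the
   new homogeneous term is merged into the component of its degree. *)
Lemma nodup_comp_addl D g v s :
  D g -> Sg g v -> nodup_comp D s -> nodup_comp D (v + s).
Proof.
move=> Dg Sv [l [x [uniql [Dl ->]]]].
case: (classic (List.In g l)) => [gl|gl].
- exists l, (upd x g (x g + v)); split=> //; split; last first.
    by rewrite sum_upd_in // [x g + v]addrC addrK addrC.
  move=> h /Dl [Dh Sx]; split=> //.
  by rewrite /upd; case: excluded_middle_informative => // hg; subst h; apply: gr_add.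
- exists (g :: l), (upd x g v); split; first exact: List.NoDup_cons.
  split; last by rewrite big_cons upd_eq sum_upd_notin.
  move=> h /= [gh|lh]; first by subst h; rewrite upd_eq.
  rewrite /upd; case: excluded_middle_informative => [hg|hg]; last exact: Dl.
  by case: gl; rewrite -hg.
Qed.

Lemma induced_comp_nodup D s : induced_comp Sg D s -> nodup_comp D s.
Proof.
move: s; apply: induced_comp_ind => [|g v t Dg Sv]; last exact: nodup_comp_addl Dg Sv.
by exists [::], (fun _ => 0); rewrite big_nil; split; first constructor.
Qed.

Lemma induced_comp_addl D g v s :
  D g -> Sg g v -> induced_comp Sg D s -> induced_comp Sg D (v + s).
Proof.
move=> Dg Sv /induced_comp_nodup /(nodup_comp_addl Dg Sv) [l [x [_ [Dl ->]]]].
by exists l, x.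
Qed.

Lemma induced_comp_hom D g v : D g -> Sg g v -> induced_comp Sg D v.
Proof. by move=> Dg Sv; rewrite -[v]addr0; apply: induced_comp_addl Dg Sv (induced_comp0 D). Qed.

Lemma induced_compD D s t :
  induced_comp Sg D s -> induced_comp Sg D t -> induced_comp Sg D (s + t).
Proof.
move=> + IDt; move: s; apply: induced_comp_ind; first by rewrite add0r.
by move=> g v s Dg Sv IDst; rewrite -addrA; apply: induced_comp_addl Dg Sv IDst.
Qed.

Hypothesis rng : is_rng mul.
Variables D1 D2 D3 : G -> Prop.
Hypothesis D123 : forall g h, D1 g -> D2 h -> D3 (op g h).

Lemma induced_comp_mul a b :
  induced_comp Sg D1 a -> induced_comp Sg D2 b -> induced_comp Sg D3 (mul a b).
Proof.
move=> + IDb; move: a; apply: induced_comp_ind => [|g v a Dg Sv IDab].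
  by rewrite rng_mul0l //; apply: induced_comp0.
rewrite (rng_mulDl rng); apply: induced_compD IDab.
move: b IDb; apply: induced_comp_ind => [|h w b Dh Sw IDvb].
  by rewrite rng_mul0r //; apply: induced_comp0.
rewrite (rng_mulDr rng); apply: (induced_comp_addl (D123 Dg Dh)) IDvb.
by apply: (gr_mul grading); exists [:: (v, w)]; rewrite big_seq1; split=> // p /[!inE] /eqP ->.
Qed.

Lemma setmul_induced_comp s :
  setmul mul (induced_comp Sg D1) (induced_comp Sg D2) s -> induced_comp Sg D3 s.
Proof.
apply: setmul_ind => [|a b t IDa IDb IDt]; first exact: induced_comp0.
by apply: induced_compD IDt; apply: induced_comp_mul.
Qed.

End InducedComponent.

Theorem proposition5p5 (G : Type) (op : G -> G -> G) (e : G) (inv : G -> G)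
    (N : G -> Prop) (S : zmodType) (mul : S -> S -> S) (Sg : G -> S -> Prop) :
  is_group op e inv ->
  is_normal_subgroup op e inv N ->
  is_rng mul ->
  is_grading op mul Sg ->
  symmetric_grading inv mul Sg ->
  forall C : G -> Prop, is_coset op inv N C ->
    forall s : S,
      setmul mul (setmul mul (induced_comp Sg C) (induced_comp Sg (setinv inv C)))
             (induced_comp Sg C) s
      <-> induced_comp Sg C s.
Proof.
move=> grp normalN rng grading symmetric C cosetC s; split.
  have NC := normal_mul_coset grp normalN cosetC.
  have CCinv := coset_mul_setinv grp normalN cosetC.
  move=> Ss; apply: (setmul_induced_comp grading rng NC).
  by apply: setmulS Ss => // a; exact: (setmul_induced_comp grading rng CCinv).
move: s; apply: induced_comp_ind => [|g v s Cg Sv IHs]; first exact: setmul0.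
apply: setmulD IHs.
have Cinv : setinv inv C (inv g) by rewrite /setinv (grp_invK grp).
move/symmetric: Sv; apply: setmulS => [a|b Sb]; last exact: (induced_comp_hom grading Cg Sb).
apply: setmulS => [c Sc|d Sd]; first exact: (induced_comp_hom grading Cg Sc).
exact: (induced_comp_hom grading Cinv Sd).
Qed.
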